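(* Let $A$ be a countable set, $\phi:\mathcal{X}_-\to\mathbb{R}$ a potential, and $(M_n)_{n\ge1}$ a strictly increasing sequence of natural numbers with $M_1=1$. Let $x,y\in\mathcal{X}_-$ and let $\mu,\nu\in\mathcal{P}(\phi)$ with $\mu[\eta_{-\infty}^0\in\cdot\,]=\delta_x$ and $\nu[\eta_{-\infty}^0\in\cdot\,]=\delta_y$. Then for all $n\ge1$, $0\le k\le n-1$ and all $a,b,c\in\mathcal{X}$, letting $w^{(b)}$ (resp. $w^{(c)}$) be the word $(w_1,\dots,w_{M_n-1})$ with $w_j=a_j$ for $M_{n-k}\le j\le M_n-1$ and $w_j=b_j$ (resp. $w_j=c_j$) for $1\le j<M_{n-k}$, \[ D_{\mathrm{KL}}\Big(\mu\big[\eta_{M_n}^{M_{n+1}-1}\in\cdot\mid \eta_1^{M_n-1}=w^{(b)}\big]\,\Big\|\,\nu\big[\eta_{M_n}^{M_{n+1}-1}\in\cdot\mid\eta_1^{M_n-1}=w^{(c)}\big]\Big)\le \sum_{j=M_n}^{M_{n+1}-1}\chi^2_{j-M_{n-k}}(\phi). \]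
   Context: $\mathcal{X}=A^{\mathbb{Z}}$, $\mathcal{X}_-=A^{\{0,-1,-2,\dots\}}$. For $a\in A$, $x\in\mathcal{X}_-$, $ax\in\mathcal{X}_-$ is the sequence $w$ with $w_0=a$, $w_{-m-1}=x_{-m}$ ($m\ge0$); for $b\in A$, $z\in\mathcal{X}$, $k\ge0$, $x\in\mathcal{X}_-$, $bz_{-k}^{-1}x$ is the sequence $w\in\mathcal{X}_-$ with $w_0=b$, $w_{-j}=z_{-j}$ ($1\le j\le k$), $w_{-k-1-m}=x_{-m}$ ($m\ge0$) (for $k=0$ this is $bx$). A potential is a measurable $\phi:\mathcal{X}_-\to\mathbb{R}$ with $\sum_{a\in A}e^{\phi(ax)}=1$ for all $x$. For $k\ge0$, $\chi^2_k(\phi)=\sup_{z\in\mathcal{X}}\sup_{x,y\in\mathcal{X}_-}\sum_{b\in A}\big(e^{\phi(bz_{-k}^{-1}x)}-e^{\phi(bz_{-k}^{-1}y)}\big)^2/e^{\phi(bz_{-k}^{-1}y)}$ (possibly $+\infty$). $\eta_n(x)=x_n$ on $\mathcal{X}$; $\eta_{-\infty}^n\in\mathcal{X}_-$ has coordinate $\eta_{n-m}$ at $-m$; $\eta_i^j=(\eta_i,\dots,\eta_j)$. A probability $\mu$ on $\mathcal{X}$ is compatible with $\phi$ if for all $n\ge0$, $a\in A$: $\mu[\eta_{n+1}=a\mid\eta_{-\infty}^n]=e^{\phi(a\,\eta_{-\infty}^n)}$ $\mu$-a.s.; $\mathcal{P}(\phi)$ is the set of such measures. For $\mu$ with $\mu[\eta_{-\infty}^0\in\cdot]=\delta_x$,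 the conditional law of the block $\eta_{m}^{m'}$ given $\eta_1^{m-1}=(w_1,\dots,w_{m-1})$ is the probability on $A^{m'-m+1}$ giving $(u_m,\dots,u_{m'})$ mass $\prod_{i=m}^{m'}e^{\phi(v^{(i)})}$, where $v^{(i)}\in\mathcal{X}_-$ has coordinates $u_i,u_{i-1},\dots,u_m,w_{m-1},\dots,w_1,x_0,x_{-1},\dots$ at positions $0,-1,-2,\dots$. $D_{\mathrm{KL}}(P\|Q)=\sum_yP(y)\ln(P(y)/Q(y))$. *)

From HB Require Import structures.
From mathcomp Require Import all_boot all_order all_algebra.
From mathcomp Require Import all_classical all_reals all_analysis.
Set Implicit Arguments. Unset Strict Implicit. Unset Printing Implicit Defensive.
Import Order.TTheory GRing.Theory Num.Theory.
Local Open Scope ring_scope.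
Local Open Scope classical_set_scope.

Definition Xfull (A : Type) := int -> A.
(* X_- = A^{0,-1,-2,...}: x m is the coordinate at position -m *)
Definition Xpast (A : Type) := nat -> A.

(* a x : w_0 = a, w_{-m-1} = x_{-m} *)
Definition pcons (A : Type) (a : A) (x : Xpast A) : Xpast A :=
  fun m => if m is m'.+1 then x m' else a.

(* b z_{-k}^{-1} x : w_0 = b, w_{-j} = z_{-j} (1<=j<=k), w_{-k-1-m} = x_{-m} *)
Definition pblock (A : Type) (b : A) (z : Xfull A) (k : nat) (x : Xpast A)
  : Xpast A :=
  fun m => if m == 0%N then b
           else if (m <= k)%N then z (- (m%:Z))
           else x (m - k.+1)%N.

(* cylinder sets of X_- (product sigma-algebra generators, A discrete) *)
Definition cylinders (A : Type) : set (set (Xpast A)) :=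
  [set C | exists (n : nat) (w : nat -> A),
      C = [set x | forall i, (i < n)%N -> x i = w i]].

Definition past_measurable (R : realType) (A : Type) (phi : Xpast A -> R) :=
  forall B : set R, measurable B -> <<s @cylinders A >> (phi @^-1` B).

Definition potential (R : realType) (A : countType) (phi : Xpast A -> R) :=
  past_measurable phi /\
  forall x : Xpast A,
    (\esum_(a in [set: A]) (expR (phi (pcons a x)))%:E = 1)%E.

Definition chi2 (R : realType) (A : countType) (k : nat) (phi : Xpast A -> R)
  : \bar R :=
  ereal_sup [set s | exists (z : Xfull A) (x y : Xpast A),
    s = (\esum_(b in [set: A])
          (((expR (phi (pblock b z k x)) - expR (phi (pblock b z k y))) ^+ 2
            / expR (phi (pblock b z k y)))%:E))%E].

(* v^{(i)}: coordinates s_i, s_{i-1}, ..., s_1, x_0, x_{-1}, ... *)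
Definition hist (A : Type) (x : Xpast A) (s : nat -> A) (i : nat) : Xpast A :=
  fun t => if (t < i)%N then s (i - t)%N else x (t - i)%N.

Definition glue (A : Type) (w : nat -> A) (m L : nat) (u : {ffun 'I_L -> A})
  : nat -> A :=
  fun j => if (j < m)%N then w j else
    match @insub _ (fun i => (i < L)%N) 'I_L (j - m)%N with
    | Some i => u i
    | None => w j
    end.

(* conditional law of eta_m^{m+L-1} given eta_1^{m-1} = w, when the past
   eta_{-oo}^0 is x (as defined in the context) *)
Definition cond_law (R : realType) (A : Type) (phi : Xpast A -> R)
  (x : Xpast A) (w : nat -> A) (m L : nat) (u : {ffun 'I_L -> A}) : R :=
  \prod_(i < L) expR (phi (hist x (glue w m u) (m + i)%N)).
Arguments cond_law {R A} phi x w m L u.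

(* D_KL(P||Q) = sum_y P(y) ln (P(y)/Q(y)) over a countable set, in \bar R
   (conventions 0 ln(0/q) = 0, p ln(p/0) = +oo for p > 0); the countable sum
   is the sum of the positive parts minus the sum of the negative parts *)
Definition KL (R : realType) (T : choiceType) (P Q : T -> R) : \bar R :=
  let f := fun t => if P t == 0 then 0%E
                    else if Q t == 0 then +oo%E
                    else (P t * ln (P t / Q t))%:E in
  (\esum_(t in [set: T]) maxe (f t) 0%E
   - \esum_(t in [set: T]) maxe (- f t)%E 0%E)%E.

(* The two conditional laws are products of the one-step kernels
   [expR (phi _)] along the block, so ln (P / Q) splits into a sum of one-step
   log-ratios.  Since ln t <= t - 1 and p (p / q - 1) = (p - q)^2 / q + p - q,
   the i-th term is bounded, up to a term of mean zero under P, by the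
   chi-square divergence between the two i-th kernels, averaged over the first
   i letters of the block.  At step i both histories end with the same
   i + M_n - M_{n-k} letters (the block prefix, then a_{M_n - 1}, ...,
   a_{M_{n-k}}), so that divergence is at most chi^2_{i + M_n - M_{n-k}}. *)

From Pilot Require Import Defs.
From HB Require Import structures.
From mathcomp Require Import all_boot all_order all_algebra.
From mathcomp Require Import all_classical all_reals all_analysis.
From mathcomp Require Import zify.
From mathcomp.algebra_tactics Require Import ring lra.
Import Order.TTheory GRing.Theory Num.Theory.
Set Implicit Arguments. Unset Strict Implicit. Unset Printing Implicit Defensive.
Local Open Scope ring_scope.
Local Open Scope classical_set_scope.

Lemma ge0_esumZl (R : realType) (T : choiceType) (S : set T) (c : R)
    (f : T -> \bar R) : 0 <= c -> (forall t, 0 <= f t)%E ->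
  (\esum_(t in S) (c%:E * f t) = c%:E * \esum_(t in S) f t)%E.
Proof.
move=> c0 f0; rewrite /esum -ereal_supZl //; last first.
  by apply/set0P; exists (\sum_(x \in set0) f x)%E; exists set0 => //; exact: fsets_set0.
congr ereal_sup; apply/seteqP; split => z /=.
  by move=> [X XS <-]; exists (\sum_(x \in X) f x)%E; [exists X|rewrite ge0_mule_fsumr].
by move=> [_ [X XS <-] <-]; exists X => //; rewrite ge0_mule_fsumr.
Qed.

Section Words.
Variable A : Type.

Definition extend (d : A) (L : nat) (u : {ffun 'I_L -> A}) : nat -> A :=
  fun j => if @insub _ (fun j => (j < L)%N) 'I_L j is Some i then u i else d.

Lemma extend_lt d L (u : {ffun 'I_L -> A}) j (jL : (j < L)%N) :
  extend d u j = u (Ordinal jL).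
Proof. by rewrite /extend insubT. Qed.

Lemma extend_ge d L (u : {ffun 'I_L -> A}) j : (L <= j)%N -> extend d u j = d.
Proof. by move=> Lj; rewrite /extend insubF // ltnNge Lj. Qed.

Definition update (s : nat -> A) (i : nat) (b : A) : nat -> A :=
  fun j => if j == i then b else s j.

Definition prefix_dep (R : Type) (n : nat) (F : (nat -> A) -> R) :=
  forall s s', (forall j, (j < n)%N -> s j = s' j) -> F s = F s'.

Lemma prefix_dep_leq R n n' (F : (nat -> A) -> R) :
  (n <= n')%N -> prefix_dep n F -> prefix_dep n' F.
Proof.
by move=> nn' F_n s s' ss'; apply: F_n => j jn; apply: ss'; exact: leq_trans nn'.
Qed.

Lemma prefix_dep_update R n (F : (nat -> A) -> R) s b :
  prefix_dep n F -> F (update s n b) = F s.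
Proof. by move=> F_n; apply: F_n => j jn; rewrite /update ltn_eqF. Qed.

End Words.

Section WordSums.
Variables (R : realType) (A : countType) (d : A).
Local Open Scope ereal_scope.

Definition word_esum (L : nat) (F : (nat -> A) -> \bar R) :=
  \esum_(u in [set: {ffun 'I_L -> A}]) F (extend d u).

Lemma eq_word_esum L (F G : (nat -> A) -> \bar R) :
  (forall s, F s = G s) -> word_esum L F = word_esum L G.
Proof. by move=> FG; apply: eq_esum => u _. Qed.

Lemma word_esum0 (F : (nat -> A) -> \bar R) : 0 <= F (fun=> d) ->
  word_esum 0 F = F (fun=> d).
Proof.
move=> F0; rewrite /word_esum; have -> : [set: {ffun 'I_0 -> A}] = [set [ffun=> d]].
  by apply/seteqP; split => u // _; apply/ffunP => -[].
have nil_d : extend d ([ffun=> d] : {ffun 'I_0 -> A}) = fun=> d.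
  by apply: funext => j; rewrite extend_ge.
by rewrite esum_set1 nil_d.
Qed.

Lemma word_esumS L (F : (nat -> A) -> \bar R) : (forall s, 0 <= F s) ->
  word_esum L.+1 F = word_esum L (fun s => \esum_(b in [set: A]) F (update s L b)).
Proof.
move=> F0; rewrite /word_esum esum_esum //.
pose split_last (v : {ffun 'I_L.+1 -> A}) :=
  ([ffun i : 'I_L => v (widen_ord (leqnSn L) i)], v ord_max).
rewrite (@reindex_esum _ _ _ [set: {ffun 'I_L.+1 -> A}] _ split_last).
  apply: eq_esum => v _; congr F; apply: funext => j; rewrite /update /=.
  have [->|jL] := eqVneq j L.
    by rewrite (extend_lt _ _ (ltnSn L)); congr (v _); apply: val_inj.
  have [jlt|jge] := ltnP j L.
    rewrite (extend_lt _ _ (ltnW jlt : (j < L.+1)%N)) (extend_lt _ _ jlt) ffunE.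
    by congr (v _); apply: val_inj.
  by rewrite !extend_ge // ltn_neqAle eq_sym jL.
rewrite (_ : _ `*`` _ = setT); last by apply/seteqP; split.
rewrite setTT_bijective.
exists (fun ub : {ffun 'I_L -> A} * A => [ffun i : 'I_L.+1 => extend ub.2 ub.1 i]).
  move=> v; apply/ffunP => i; rewrite ffunE /=.
  have [ilt|ige] := ltnP i L.
    by rewrite (extend_lt _ _ ilt) ffunE; congr (v _); apply: val_inj.
  rewrite extend_ge //; congr (v _); apply: val_inj => /=.
  by apply/eqP; rewrite eqn_leq ige -ltnS ltn_ord.
move=> [u b]; congr (_, _) => /=.
  apply/ffunP => i; rewrite !ffunE /= (extend_lt _ _ (ltn_ord i)).
  by congr (u _); apply: val_inj.
by rewrite ffunE extend_ge.
Qed.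

End WordSums.

Section Kernels.
Variables (R : realType) (A : countType) (d : A).
Variable kern : nat -> (nat -> A) -> R.
Hypothesis kern_ge0 : forall j s, 0 <= kern j s.
Hypothesis kern_dep : forall j, prefix_dep j.+1 (kern j).
Hypothesis kern_norm :
  forall j s, (\esum_(b in [set: A]) (kern j (update s j b))%:E = 1)%E.

Lemma prefix_dep_prod_kern n i i' :
  (i' <= n)%N -> prefix_dep n (fun s => \prod_(i <= j < i') kern j s).
Proof.
move=> i'n s s' ss'; rewrite big_seq_cond [RHS]big_seq_cond; apply: eq_bigr => j.
rewrite mem_index_iota andbT => /andP[_ ji'].
by apply: kern_dep => t tj; apply: ss'; apply: leq_trans tj (leq_trans ji' i'n).
Qed.

Local Open Scope ereal_scope.

Lemma word_esum_prod_kern_tail L N (F : (nat -> A) -> R) :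
  (N <= L)%N -> (forall s, 0 <= F s)%R -> prefix_dep N F ->
  word_esum d L (fun s => (F s * \prod_(N <= j < L) kern j s)%:E) =
  word_esum d N (fun s => (F s)%:E).
Proof.
elim: L => [|L IH] NL F0 F_dep.
  by move: NL; rewrite leqn0 => /eqP ->; apply: eq_word_esum => s; rewrite big_geq ?mulr1.
have [->|NL'] := eqVneq N L.+1.
  by apply: eq_word_esum => s; rewrite big_geq ?mulr1.
have NL2 : (N <= L)%N by rewrite -ltnS ltn_neqAle NL' NL.
rewrite word_esumS; last by move=> s; rewrite lee_fin mulr_ge0 // prodr_ge0.
rewrite -IH //; apply: eq_word_esum => s.
under eq_esum => b _ do rewrite big_nat_recr //= mulrA EFinM
  (prefix_dep_update _ _ (prefix_dep_leq NL2 F_dep))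
  (prefix_dep_update _ _ (prefix_dep_prod_kern N (leqnn L))).
by rewrite ge0_esumZl ?kern_norm ?mule1 ?mulr_ge0 ?prodr_ge0 // => b; rewrite lee_fin.
Qed.

Lemma word_esum_prod_kern L :
  word_esum d L (fun s => (\prod_(0 <= j < L) kern j s)%:E) = 1.
Proof.
under eq_word_esum do rewrite -[X in X%:E]mul1r.
by rewrite word_esum_prod_kern_tail // word_esum0.
Qed.

Definition prod_kern_at (L i : nat) (h : (nat -> A) -> R) (s : nat -> A) : R :=
  \prod_(0 <= j < i) kern j s * h s * \prod_(i.+1 <= j < L) kern j s.

Lemma prod_kern_at_ge0 L i h s : (0 <= h s)%R -> (0 <= prod_kern_at L i h s)%R.
Proof. by move=> h0; rewrite /prod_kern_at !mulr_ge0 // prodr_ge0. Qed.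

Lemma word_esum_prod_kern_at L i h :
  (i < L)%N -> (forall s, 0 <= h s)%R -> prefix_dep i.+1 h ->
  word_esum d L (fun s => (prod_kern_at L i h s)%:E) =
  word_esum d i (fun s => (\prod_(0 <= j < i) kern j s)%:E *
                          \esum_(b in [set: A]) (h (update s i b))%:E).
Proof.
move=> iL h0 h_dep.
have left_dep : prefix_dep i.+1 (fun s => \prod_(0 <= j < i) kern j s * h s)%R.
  by move=> s s' ss' /=; rewrite (prefix_dep_prod_kern 0 (leqnSn i) ss') (h_dep _ _ ss').
rewrite /prod_kern_at word_esum_prod_kern_tail //; last first.
  by move=> s; rewrite mulr_ge0 // prodr_ge0.
rewrite word_esumS; last by move=> s; rewrite lee_fin mulr_ge0 // prodr_ge0.
apply: eq_word_esum => s; rewrite -ge0_esumZl ?prodr_ge0 // => [|b]; last by rewrite lee_fin.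
apply: eq_esum => b _.
by rewrite (prefix_dep_update _ _ (prefix_dep_prod_kern 0 (leqnn i))).
Qed.

Lemma word_esum_prod_kern_at_le L i h (C : \bar R) :
  (i < L)%N -> (forall s, 0 <= h s)%R -> prefix_dep i.+1 h ->
  (forall s, \esum_(b in [set: A]) (h (update s i b))%:E <= C) ->
  word_esum d L (fun s => (prod_kern_at L i h s)%:E) <= C.
Proof.
move=> iL h0 h_dep hC; rewrite word_esum_prod_kern_at //.
have C0 : 0 <= C.
  by apply: le_trans (hC (fun=> d)); apply: esum_ge0 => b _; rewrite lee_fin.
case: C C0 hC => [C| |] C0 hC; last 2 first.
- by rewrite leey.
- by move: C0; rewrite leeNy_eq.
rewrite -[C%:E]mule1 -(word_esum_prod_kern i) /word_esum -ge0_esumZl //; last first.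
  by move=> u; rewrite lee_fin prodr_ge0.
apply: le_esum => u _; rewrite [leRHS]muleC.
by apply: lee_wpmul2l; [rewrite lee_fin prodr_ge0 | exact: hC].
Qed.

End Kernels.

Lemma ln_prod (R : realType) (I : Type) (r : seq I) (f : I -> R) :
  (forall i, 0 < f i) -> ln (\prod_(i <- r) f i) = \sum_(i <- r) ln (f i).
Proof.
move=> f_gt0; rewrite (eq_bigr (fun i => expR (ln (f i)))) => [|i _].
  by rewrite -expR_sum expRK.
by rewrite lnK // posrE.
Qed.

Lemma ln_le_subr1 (R : realType) (t : R) : 0 < t -> ln t <= t - 1.
Proof. by move=> t_gt0; rewrite lerBrDl -[leRHS]lnK ?posrE // expR_ge1Dx. Qed.

Lemma KL_posE (R : realType) (T : choiceType) (P Q : T -> R) :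
  (forall t, 0 < P t) -> (forall t, 0 < Q t) ->
  KL P Q = (\esum_(t in [set: T]) (Num.max (P t * ln (P t / Q t)) 0)%:E
          - \esum_(t in [set: T]) (Num.max (- (P t * ln (P t / Q t))) 0)%:E)%E.
Proof.
move=> P_gt0 Q_gt0; rewrite /KL; congr (_ - _)%E; apply: eq_esum => t _;
  by rewrite (gt_eqF (P_gt0 t)) (gt_eqF (Q_gt0 t)) ?EFinN EFin_max.
Qed.

Lemma esum_posneg_le (R : realType) (T : choiceType) (g h U V : T -> R) :
  (forall t, 0 <= h t) -> (forall t, 0 <= U t) -> (forall t, 0 <= V t) ->
  (\esum_(t in [set: T]) (U t)%:E = \esum_(t in [set: T]) (V t)%:E)%E ->
  (\esum_(t in [set: T]) (U t)%:E)%E \is a fin_num ->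
  (forall t, g t <= h t + U t - V t) ->
  (\esum_(t in [set: T]) (Num.max (g t) 0)%:E
   - \esum_(t in [set: T]) (Num.max (- g t) 0)%:E
   <= \esum_(t in [set: T]) (h t)%:E)%E.
Proof.
move=> h0 U0 V0 UV U_fin g_le.
have max0 (r : R) : (0 <= (Num.max r 0)%:E)%E by rewrite lee_fin le_max lexx orbT.
have pw t : ((Num.max (g t) 0)%:E + (V t)%:E <=
             (h t)%:E + (U t)%:E + (Num.max (- g t) 0)%:E)%E.
  rewrite -!EFinD lee_fin; have := g_le t.
  have [g0|g0] := leP 0 (g t).
    have ng0 : - g t <= 0 by rewrite oppr_le0.
    by rewrite (max_r ng0); lra.
  have ng0 : 0 <= - g t by rewrite oppr_ge0 ltW.
  by rewrite (max_l ng0); lra.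
have := le_esum (fun t (_ : [set: T] t) => pw t).
rewrite esumD; last 2 first.
- by move=> t _.
- by move=> t _; rewrite lee_fin.
rewrite esumD; last 2 first.
- by move=> t _; rewrite adde_ge0 ?lee_fin.
- by move=> t _.
rewrite esumD; last 2 first.
- by move=> t _; rewrite lee_fin.
- by move=> t _; rewrite lee_fin.
rewrite -UV addeAC leeD2rE // => pos_le.
set Nneg := (\esum_(t in [set: T]) (Num.max (- g t) 0)%:E)%E in pos_le *.
have [Nneg_fin|] := boolP (Nneg \is a fin_num); first by rewrite leeBlDr.
rewrite ge0_fin_numE ?esum_ge0 // -leNgt leye_eq => /eqP ->.
by rewrite addeNy leNye.
Qed.

Section KLChainRule.
Variables (R : realType) (A : countType) (d : A) (L : nat).
Variables p q : nat -> (nat -> A) -> R.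
Hypotheses (p_gt0 : forall j s, 0 < p j s) (q_gt0 : forall j s, 0 < q j s).
Hypotheses (p_dep : forall j, prefix_dep j.+1 (p j))
           (q_dep : forall j, prefix_dep j.+1 (q j)).
Hypotheses
  (p_norm : forall j s, (\esum_(b in [set: A]) (p j (update s j b))%:E = 1)%E)
  (q_norm : forall j s, (\esum_(b in [set: A]) (q j (update s j b))%:E = 1)%E).

Let p_ge0 j s : 0 <= p j s. Proof. exact/ltW. Qed.

Definition chi2_kern (i : nat) (s : nat -> A) : R := (p i s - q i s) ^+ 2 / q i s.

Lemma prod_kern_ln_ratio_le s :
  \prod_(0 <= j < L) p j s *
    ln (\prod_(0 <= j < L) p j s / \prod_(0 <= j < L) q j s) <=
  \sum_(i < L) prod_kern_at p L i (chi2_kern i) s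
  + \sum_(i < L) \prod_(0 <= j < L) p j s
  - \sum_(i < L) prod_kern_at p L i (q i) s.
Proof.
set P := \prod_(0 <= j < L) p j s.
rewrite -big_split -sumrB ln_div ?posrE ?prodr_gt0 // !ln_prod //.
rewrite -sumrB mulr_sumr big_mkord; apply: ler_sum => i _.
set Pl := \prod_(0 <= j < i) p j s; set Pr := \prod_(i.+1 <= j < L) p j s.
have P_split : P = Pl * p i s * Pr.
  by rewrite /P (big_cat_nat (leq0n i) (ltnW (ltn_ord i))) /= (big_ltn (ltn_ord i)) mulrA.
have ln_ratio : ln (p i s) - ln (q i s) <= p i s / q i s - 1.
  by rewrite -ln_div ?posrE // ln_le_subr1 ?divr_gt0.
have -> : prod_kern_at p L i (chi2_kern i) s + P - prod_kern_at p L i (q i) s =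
          P * (p i s / q i s - 1).
  by rewrite P_split /prod_kern_at /chi2_kern -/Pl -/Pr; field; rewrite gt_eqF.
by rewrite ler_wpM2l // prodr_ge0.
Qed.

Local Open Scope ereal_scope.

Lemma word_esum_prod_kern_at_q i : (i < L)%N ->
  word_esum d L (fun s => (prod_kern_at p L i (q i) s)%:E) = 1.
Proof.
move=> iL; rewrite word_esum_prod_kern_at // => [|s]; last exact/ltW.
under eq_word_esum do rewrite q_norm mule1.
exact: word_esum_prod_kern.
Qed.

Lemma KL_prod_kern_le (C : nat -> \bar R) :
  (forall i s, (i < L)%N ->
     \esum_(b in [set: A]) (chi2_kern i (update s i b))%:E <= C i) ->
  KL (fun u : {ffun 'I_L -> A} => (\prod_(0 <= j < L) p j (extend d u))%R)
     (fun u => (\prod_(0 <= j < L) q j (extend d u))%R) <= \sum_(i < L) C i.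
Proof.
move=> chi2_le.
have chi2_ge0 i s : (0 <= chi2_kern i s)%R by rewrite divr_ge0 ?sqr_ge0 ?ltW.
have chi2_dep i : prefix_dep i.+1 (chi2_kern i).
  by move=> s s' ss'; rewrite /chi2_kern (p_dep ss') (q_dep ss').
have D_ge0 i s : (0 <= prod_kern_at p L i (chi2_kern i) s)%R.
  exact: prod_kern_at_ge0.
have Y_ge0 i s : (0 <= prod_kern_at p L i (q i) s)%R.
  exact/prod_kern_at_ge0/ltW.
have esum_sum_prod (F : 'I_L -> (nat -> A) -> R) : (forall i s, 0 <= F i s)%R ->
    \esum_(u in [set: {ffun 'I_L -> A}]) (\sum_(i < L) F i (extend d u))%:E =
    \sum_(i < L) word_esum d L (fun s => (F i s)%:E).
  move=> F0; under eq_esum do rewrite -sumEFin.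
  by rewrite esum_sum // => u i _ _; rewrite lee_fin.
rewrite KL_posE; last 2 first.
- by move=> u; apply: prodr_gt0.
- by move=> u; apply: prodr_gt0.
pose P (u : {ffun 'I_L -> A}) := (\prod_(0 <= j < L) p j (extend d u))%R.
pose Q (u : {ffun 'I_L -> A}) := (\prod_(0 <= j < L) q j (extend d u))%R.
apply: le_trans (esum_posneg_le (g := fun u => (P u * ln (P u / Q u))%R)
  (h := fun u => (\sum_(i < L) prod_kern_at p L i (chi2_kern i) (extend d u))%R)
  (U := fun u => (\sum_(i < L) \prod_(0 <= j < L) p j (extend d u))%R)
  (V := fun u => (\sum_(i < L) prod_kern_at p L i (q i) (extend d u))%R) _ _ _ _ _ _) _.
- by move=> u; rewrite sumr_ge0.
- by move=> u; rewrite sumr_ge0 // => i _; rewrite prodr_ge0.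
- by move=> u; rewrite sumr_ge0.
- rewrite (esum_sum_prod (fun i s => prod_kern_at p L i (q i) s)) //.
  rewrite (esum_sum_prod (fun _ s => \prod_(0 <= j < L) p j s)%R); last first.
    by move=> i s; rewrite prodr_ge0.
  apply: eq_bigr => i _; rewrite word_esum_prod_kern_at_q //.
  exact: word_esum_prod_kern.
- rewrite (esum_sum_prod (fun _ s => \prod_(0 <= j < L) p j s)%R); last first.
    by move=> i s; rewrite prodr_ge0.
  by rewrite (eq_bigr (fun=> 1)) ?sumEFin // => i _; exact: word_esum_prod_kern.
- by move=> u; exact: prod_kern_ln_ratio_le.
rewrite (esum_sum_prod (fun i s => prod_kern_at p L i (chi2_kern i) s)) //.
apply: lee_sum => i _.
by apply: word_esum_prod_kern_at_le => // s; exact: chi2_le.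
Qed.

End KLChainRule.

Section BlockHistories.
Variables (R : realType) (A : countType) (phi : Xpast A -> R).

Definition glue_seq (w : nat -> A) (m : nat) (s : nat -> A) : nat -> A :=
  fun j => if (j < m)%N then w j else s (j - m)%N.

Definition block_hist (x : Xpast A) (w : nat -> A) (m : nat) (s : nat -> A)
    (j : nat) : Xpast A :=
  hist x (glue_seq w m s) (m + j).

Lemma prefix_dep_block_kern x w m j :
  prefix_dep j.+1 (fun s => expR (phi (block_hist x w m s j))).
Proof.
move=> s s' ss'; congr (expR (phi _)); apply: funext => t.
rewrite /block_hist /hist /glue_seq; case: ifPn => // t_lt; case: ifPn => // _.
by apply: ss'; lia.
Qed.

Lemma block_hist_update x w m s j b : (0 < m)%N ->
  block_hist x w m (update s j b) j = pcons b (fun t => block_hist x w m s j t.+1).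
Proof.
move=> m_gt0; apply: funext => -[|t]; rewrite /block_hist /hist /glue_seq /pcons /update.
  have mj_gt0 : (0 < m + j)%N by lia.
  by rewrite mj_gt0 subn0 ltnNge leq_addr /= addKn eqxx.
case: ifPn => // t_lt; case: ifPn => // m_le.
by rewrite ifF //; lia.
Qed.

Lemma block_kern_norm x w m s j : potential phi -> (0 < m)%N ->
  (\esum_(b in [set: A]) (expR (phi (block_hist x w m (update s j b) j)))%:E = 1)%E.
Proof.
by move=> [_ phi_norm] m_gt0; under eq_esum do rewrite block_hist_update //.
Qed.

Lemma cond_law_block d x w m L (u : {ffun 'I_L -> A}) :
  cond_law phi x w m L u =
  \prod_(0 <= j < L) expR (phi (block_hist x w m (extend d u) j)).
Proof.
rewrite /cond_law big_mkord; apply: eq_bigr => i _; congr (expR (phi _)).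
apply: funext => t; rewrite /block_hist /hist /Defs.glue /glue_seq.
case: ifPn => // t_lt; case: ifPn => // _.
have i_lt : (m + i - t - m < L)%N by have := ltn_ord i; lia.
case: (@insubP _ (fun j => (j < L)%N) _ (m + i - t - m)%N) => [v _ vE|].
  by rewrite (extend_lt _ _ i_lt); congr (u _); apply: val_inj; rewrite /= vE.
by rewrite i_lt.
Qed.

Lemma esum_chi2_block_le x y w w' m N s i : (0 < m)%N -> (0 < N)%N ->
  (forall j, (N <= j)%N -> w j = w' j) ->
  (\esum_(b in [set: A])
     ((expR (phi (block_hist x w m (update s i b) i))
       - expR (phi (block_hist y w' m (update s i b) i))) ^+ 2
      / expR (phi (block_hist y w' m (update s i b) i)))%:E
   <= chi2 (A := A) (i + m - N) phi)%E.
Proof.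
move=> m_gt0 N_gt0 ww'; set K := (i + m - N)%N.
apply: ereal_sup_ubound.
exists (fun z : int => block_hist x w m s i `|z|%N),
  (fun t => block_hist x w m s i (t + K.+1)%N),
  (fun t => block_hist y w' m s i (t + K.+1)%N).
apply: eq_esum => b _.
have past_x : block_hist x w m (update s i b) i =
    Defs.pblock b (fun z : int => block_hist x w m s i `|z|%N) K
      (fun t => block_hist x w m s i (t + K.+1)%N).
  apply: funext => -[|t]; rewrite block_hist_update // /Defs.pblock /pcons //=.
  by case: ifPn => // tK; rewrite subnK // ltnS leqNgt.
have past_y : block_hist y w' m (update s i b) i =
    Defs.pblock b (fun z : int => block_hist x w m s i `|z|%N) K
      (fun t => block_hist y w' m s i (t + K.+1)%N).
  apply: funext => -[|t]; rewrite block_hist_update // /Defs.pblock /pcons //=.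
  case: ifPn => tK; last by rewrite subnK // ltnS leqNgt.
  have t_lt : (t.+1 < m + i)%N by lia.
  rewrite /block_hist /hist /glue_seq t_lt.
  by case: ifPn => // _; rewrite ww' //; lia.
by rewrite past_x past_y.
Qed.

End BlockHistories.

Local Close Scope classical_set_scope.
Unset Implicit Arguments.
Theorem lemma1 (R : realType) (A : countType) (phi : Xpast A -> R)
  (M : nat -> nat)
  (hphi : potential phi)
  (hM : forall n, (1 <= n)%N -> (M n < M n.+1)%N)
  (hM1 : M 1%N = 1%N)
  (x y : Xpast A) (n k : nat) (a b c : Xfull A) :
  (1 <= n)%N -> (k <= n.-1)%N ->
  let wb := fun j : nat => if (M (n - k) <= j)%N then a j%:Z else b j%:Z in
  let wc := fun j : nat => if (M (n - k) <= j)%N then a j%:Z else c j%:Z in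
  let L := (M n.+1 - M n)%N in
  (KL (cond_law phi x wb (M n) L) (cond_law phi y wc (M n) L)
   <= \sum_(M n <= j < M n.+1) chi2 (A := A) (j - M (n - k))%N phi)%E.
Proof.
move=> n_ge1 kn; cbv zeta.
set wb := fun j : nat => if (M (n - k) <= j)%N then a j%:Z else b j%:Z.
set wc := fun j : nat => if (M (n - k) <= j)%N then a j%:Z else c j%:Z.
set L := (M n.+1 - M n)%N.
have M_gt0 j : (0 < j)%N -> (0 < M j)%N.
  elim: j => [//|[|j] IH _]; first by rewrite hM1.
  exact: ltn_trans _ (IH isT) (hM j.+1 isT).
have Mn_gt0 : (0 < M n)%N by apply: M_gt0.
have wbc j : (M (n - k) <= j)%N -> wb j = wc j by rewrite /wb /wc => ->.
have -> : (\sum_(M n <= j < M n.+1) chi2 (A := A) (j - M (n - k))%N phi =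
           \sum_(i < L) chi2 (A := A) (i + M n - M (n - k))%N phi)%E.
  by rewrite -{1}(add0n (M n)) big_addn big_mkord.
have cond_law_prod (z : Xpast A) w : cond_law phi z w (M n) L =
    fun u => (\prod_(0 <= j < L) expR (phi (block_hist z w (M n) (extend (a 0) u) j)))%R.
  by apply: funext => u; exact: cond_law_block.
rewrite !cond_law_prod.
apply: (@KL_prod_kern_le _ _ (a 0) L
          (fun j s => expR (phi (block_hist x wb (M n) s j)))
          (fun j s => expR (phi (block_hist y wc (M n) s j))) _ _ _ _ _ _
          (fun i => chi2 (A := A) (i + M n - M (n - k))%N phi))
  => [j s|j s|j|j|j s|j s|i s _].
- exact: expR_gt0.
- exact: expR_gt0.
- exact: prefix_dep_block_kern.
- exact: prefix_dep_block_kern.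
- exact: block_kern_norm.
- exact: block_kern_norm.
- by apply: esum_chi2_block_le => //; apply: M_gt0; lia.
Qed.
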